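(* Let $(\mathbf a,\mathbf b)$ be a binary GCP of length $N$ of one of the following three kinds: (i) $N=10^\beta$ ($\beta\ge1$), obtained as $(\mathbf e_0,\mathbf f_0)=K_{10}$, $(\mathbf e_i,\mathbf f_i)=\mathrm{Turyn}(K_{10},(\mathbf e_{i-1},\mathbf f_{i-1}))$; set $Z=4N/10+1$; (ii) $N=26^\gamma$ ($\gamma\ge1$), obtained as $(\mathbf e_0,\mathbf f_0)=K_{26}$, $(\mathbf e_i,\mathbf f_i)=\mathrm{Turyn}(K_{26},(\mathbf e_{i-1},\mathbf f_{i-1}))$; set $Z=12N/26+1$; (iii) $N=10^\beta26^\gamma$ ($\beta\ge0$, $\gamma\ge1$), obtained as $(\mathbf e_0,\mathbf f_0)=K_{26}$, $(\mathbf e_i,\mathbf f_i)=\mathrm{Turyn}(\mathcal A_i,(\mathbf e_{i-1},\mathbf f_{i-1}))$ with each $\mathcal A_i\in\{K_{10},K_{26}\}$; set $Z=12N/26+1$. Let $(\mathbf c,\mathbf d)=(\overleftarrow{\mathbf b},-\overleftarrow{\mathbf a})$, $\mathbf e=(\mathbf a\|\mathbf c)$, $\mathbf f=(\mathbf b\|\mathbf d)$, and for $x_0,y_0,x_1,y_1\in\mathbb U_q$ let $\mathbf g=(x_0,e_0,\dots,e_{2N-1},y_0)$, $\mathbf h=(x_1,f_0,\dots,f_{2N-1},y_1)$. If $x_0-\overline{y_1}=0$, $x_1+\overline{y_0}=0$, $x_0=x_1$ and $\overline{y_0}=-\overline{y_1}$, then $(\mathbf g,\mathbf h)$ is a $(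2N+2,Z)$-CZCP.
   Context: $q\ge2$ is an integer and $\mathbb U_q=\{e^{2\pi\sqrt{-1}t/q}:0\le t<q\}$. $\overleftarrow{\mathbf a}$ denotes the reversal of $\mathbf a$; $\|$ denotes concatenation. A binary GCP of length $N$ is a pair of $\pm1$ sequences with $\rho_{\mathbf a}(\tau)+\rho_{\mathbf b}(\tau)=0$ for all $\tau\neq0$. Kernels (with $+=1$, $-=-1$; first row $\mathbf a$, second row $\mathbf b$): $K_{10}=(++-+-+--++,\;++-+++++--)$; $K_{26}=(++++-++--+-+-+--+-+++--+++,\;++++-++--+-+++++-+---++---)$. Turyn's method: for binary GCPs $\mathcal A=(\mathbf a,\mathbf b)$ of length $N$ and $\mathcal B=(\mathbf c,\mathbf d)$ of length $M$, $\mathrm{Turyn}(\mathcal A,\mathcal B)=(\mathbf e,\mathbf f)$ of length $MN$ with $\mathbf e=\mathbf c\otimes\frac{\mathbf a+\mathbf b}2-\overleftarrow{\mathbf d}\otimes\frac{\mathbf b-\mathbf a}2$, $\mathbf f=\mathbf d\otimes\frac{\mathbf a+\mathbf b}2+\overleftarrow{\mathbf c}\otimes\frac{\mathbf b-\mathbf a}2$, where $\mathbf u\otimes\mathbf v=(u_0\mathbf v,u_1\mathbf v,\dots)$. Aperiodic correlation: for complex sequences of length $N$, $\rho_{\mathbf a,\mathbf b}(\tau)=\sum_{k=0}^{N-1-\tau}a_k\overline{b_{k+\tau}}$ for $0\le\tau\le N-1$, $\rho_{\mathbf a,\mathbf b}(\tau)=\sum_{k=0}^{N-1+\tau}a_{k-\tau}\overline{b_k}$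 for $-(N-1)\le\tau\le-1$, $0$ otherwise; $\rho_{\mathbf a}=\rho_{\mathbf a,\mathbf a}$. CZCP: with $\mathcal T_1=\{1,\dots,Z\}$, $\mathcal T_2=\{N-Z,\dots,N-1\}$, a pair of length-$N$ sequences is an $(N,Z)$-CZCP if $\rho_{\mathbf a}(\tau)+\rho_{\mathbf b}(\tau)=0$ for all $|\tau|\in\mathcal T_1\cup\mathcal T_2$ and $\rho_{\mathbf a,\mathbf b}(\tau)+\rho_{\mathbf b,\mathbf a}(\tau)=0$ for all $|\tau|\in\mathcal T_2$. *)

From HB Require Import structures.
From mathcomp Require Import all_boot all_order all_algebra all_field.
Set Implicit Arguments. Unset Strict Implicit. Unset Printing Implicit Defensive.
Import Order.TTheory GRing.Theory Num.Theory.
Local Open Scope ring_scope.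

(* U_q = { e^{2 pi i t / q} : 0 <= t < q } = the set of q-th roots of unity *)
Definition Uq (q : nat) : pred algC := fun z => z ^+ q == 1.

Definition spair := (seq algC * seq algC)%type.

Definition seqsub (u v : seq algC) : seq algC := [seq p.1 - p.2 | p <- zip u v].
Definition seqopp (u : seq algC) : seq algC := [seq - x | x <- u].

Definition kron (u v : seq algC) : seq algC :=
  flatten [seq [seq x * y | y <- v] | x <- u].

Definition turyn (A B : spair) : spair :=
  let: (a, b) := A in
  let: (c, d) := B in
  let s := [seq (p.1 + p.2) / 2 | p <- zip a b] in
  let t := [seq (p.2 - p.1) / 2 | p <- zip a b] in
  (seqsub (kron c s) (kron (rev d) t),
   [seq p.1 + p.2 | p <- zip (kron d s) (kron (rev c) t)]).

Definition pm (s : seq int) : seq algC := [seq z%:~R | z <- s].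

Definition K10 : spair :=
  (pm [:: 1; 1; -1; 1; -1; 1; -1; -1; 1; 1],
   pm [:: 1; 1; -1; 1; 1; 1; 1; 1; -1; -1]).

Definition K26 : spair :=
  (pm [:: 1; 1; 1; 1; -1; 1; 1; -1; -1; 1; -1; 1; -1; 1; -1; -1; 1; -1; 1; 1; 1; -1; -1; 1; 1; 1],
   pm [:: 1; 1; 1; 1; -1; 1; 1; -1; -1; 1; -1; 1; 1; 1; 1; 1; -1; 1; -1; -1; -1; 1; 1; -1; -1; -1]).

Definition turyn_chain (init : spair) (s : seq bool) : spair :=
  foldl (fun acc (c : bool) => turyn (if c then K10 else K26) acc) init s.

Definition rho (a b : seq algC) (tau : int) : algC :=
  let N := size a in
  match tau with
  | Posz t => \sum_(k < N - t) a`_k * (b`_(k + t))^*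
  | Negz _ => let t := `|tau|%N in \sum_(k < N - t) a`_(k + t) * (b`_k)^*
  end.

Definition CZCP (N Z : nat) (a b : seq algC) : Prop :=
  [/\ size a = N, size b = N,
      (forall tau : int,
          ((1 <= `|tau|%N <= Z) || (N - Z <= `|tau|%N <= N - 1))%N ->
          rho a a tau + rho b b tau = 0) &
      (forall tau : int, (N - Z <= `|tau|%N <= N - 1)%N ->
          rho a b tau + rho b a tau = 0)].

From HB Require Import structures.
From mathcomp Require Import all_boot all_order all_algebra all_field.
From mathcomp Require Import ring zify.
Set Implicit Arguments.
Unset Strict Implicit.
Unset Printing Implicit Defensive.

Import Order.TTheory GRing.Theory Num.Theory.
Local Open Scope ring_scope.

(* A sequence u is identified with the polynomial Poly u; the aperiodic correlations of g and h
   are then the coefficients of Poly g * Poly (conj (rev h)), which is Poly g * Poly (rev h)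
   when h is real.

   The sum of the autocorrelation polynomials of Turyn(A, B) is, up to a factor 1/2 and the
   substitution X := X^n (n the length of A) in B's, the product of those of A and B
   ([acorr_kron_pair]), so it maps real Golay pairs to real Golay pairs.  If the two sequences of
   B agree on their first p entries and are opposite on their last p entries, those of Turyn(A, B)
   do so for n p entries.  For K10 and K26 one has p = 4 and p = 12, so every pair of the three
   families has p = 4N/10, resp. 12N/26, i.e. Z = p + 1.

   For the extended pair (g, h), with A, B the polynomials of a, b, the sum of the
   autocorrelation polynomials is 2x X (B - A) modulo monomials of degree > 2N (the Golay
   property collapses Poly a * Poly (rev a) + Poly b * Poly (rev b) into a single monomial,
   of degree 2N + 1 after the shifts), and the sum of the cross-correlation polynomials is
   X^2 (B - A)(B + A) modulo monomials of degree > N.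
   Since B - A has no coefficients below p, nor from N on, the correlations vanish on both
   zero-correlation zones. *)

Section PolySeq.
Variable R : comNzRingType.
Implicit Types (x c al be : R) (u v s : seq R).

Lemma Poly_cons x s : Poly (x :: s) = x%:P + 'X * Poly s.
Proof. by rewrite /= cons_poly_def addrC mulrC. Qed.

Lemma Poly_cat u v : Poly (u ++ v) = Poly u + 'X^(size u) * Poly v.
Proof.
elim: u => [|x u IH]; first by rewrite /= expr0 mul1r add0r.
by rewrite cat_cons !Poly_cons IH /= exprS; ring.
Qed.

Lemma Poly_rcons s x : Poly (rcons s x) = Poly s + 'X^(size s) * x%:P.
Proof. by rewrite -cats1 Poly_cat Poly_cons /= mulr0 addr0. Qed.

Lemma Poly_scale c v : Poly [seq c * y | y <- v] = c%:P * Poly v.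
Proof.
elim: v => [|y v IH]; first by rewrite /= mulr0.
by rewrite map_cons !Poly_cons IH polyCM; ring.
Qed.

Lemma Poly_opp v : Poly [seq - y | y <- v] = - Poly v.
Proof.
elim: v => [|y v IH]; first by rewrite /= oppr0.
by rewrite map_cons !Poly_cons IH polyCN; ring.
Qed.

Lemma Poly_zip_comb al be u v : size u = size v ->
  Poly [seq al * p.1 + be * p.2 | p <- zip u v] = al%:P * Poly u + be%:P * Poly v.
Proof.
elim: u v => [|x u IH] [|y v] //=; first by rewrite !mulr0 addr0.
by move=> [/IH IHu]; rewrite !cons_poly_def IHu polyCD !polyCM; ring.
Qed.

End PolySeq.

Lemma Poly_seqsub (u v : seq algC) : size u = size v ->
  Poly (seqsub u v) = Poly u - Poly v.
Proof.
move=> suv; rewrite /seqsub (eq_map (g := fun p => 1 * p.1 + (-1) * p.2)).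
  by rewrite Poly_zip_comb // polyCN polyC1; ring.
by move=> p; ring.
Qed.

Lemma Poly_zip_add (u v : seq algC) : size u = size v ->
  Poly [seq p.1 + p.2 | p <- zip u v] = Poly u + Poly v.
Proof.
move=> suv; rewrite (eq_map (g := fun p => 1 * p.1 + 1 * p.2)).
  by rewrite Poly_zip_comb // polyC1; ring.
by move=> p; ring.
Qed.

Lemma Poly_half_sum (u v : seq algC) : size u = size v ->
  Poly [seq (p.1 + p.2) / 2 | p <- zip u v] = 2^-1%:P * (Poly u + Poly v).
Proof.
move=> suv; rewrite (eq_map (g := fun p => 2^-1 * p.1 + 2^-1 * p.2)).
  by rewrite Poly_zip_comb //; ring.
by move=> p; ring.
Qed.

Lemma Poly_half_diff (u v : seq algC) : size u = size v ->
  Poly [seq (p.2 - p.1) / 2 | p <- zip u v] = 2^-1%:P * (Poly v - Poly u).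
Proof.
move=> suv; rewrite (eq_map (g := fun p => (- 2^-1) * p.1 + 2^-1 * p.2)).
  by rewrite Poly_zip_comb // polyCN; ring.
by move=> p; ring.
Qed.

Lemma size_zip_map (T : Type) (f : algC * algC -> T) (u v : seq algC) :
  size u = size v -> size [seq f p | p <- zip u v] = size u.
Proof. by move=> suv; rewrite size_map size_zip suv minnn. Qed.

Lemma nth_zip_map (f : algC * algC -> algC) (u v : seq algC) k :
  size u = size v -> (k < size u)%N -> [seq f p | p <- zip u v]`_k = f (u`_k, v`_k).
Proof.
move=> suv hk; rewrite (nth_map (0, 0)) ?nth_zip //.
by rewrite size_zip suv minnn -suv.
Qed.

Lemma rev_zip_map (T : Type) (f : algC * algC -> T) (u v : seq algC) :
  size u = size v -> rev [seq f p | p <- zip u v] = [seq f p | p <- zip (rev u) (rev v)].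
Proof. by move=> suv; rewrite -map_rev rev_zip. Qed.

Lemma all_zip_map (P : pred algC) (f : algC * algC -> algC) (u v : seq algC) :
  (forall x y, P x -> P y -> P (f (x, y))) -> all P u -> all P v ->
  all P [seq f p | p <- zip u v].
Proof.
move=> Pf; elim: u v => [|x u IH] [|y v] //= /andP [Px Pu] /andP [Py Pv].
by rewrite Pf // IH.
Qed.

Lemma kron_cons (x : algC) u v : kron (x :: u) v = [seq x * y | y <- v] ++ kron u v.
Proof. by []. Qed.

Lemma kron_cat u1 u2 v : kron (u1 ++ u2) v = kron u1 v ++ kron u2 v.
Proof. by rewrite /kron map_cat flatten_cat. Qed.

Lemma size_kron u v : size (kron u v) = (size u * size v)%N.
Proof. by elim: u => [|x u IH] //; rewrite kron_cons size_cat size_map IH mulSn. Qed.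

Lemma rev_kron u v : rev (kron u v) = kron (rev u) (rev v).
Proof.
elim: u => [|x u IH] //; rewrite kron_cons rev_cat IH rev_cons -cats1 kron_cat.
by rewrite /kron /= cats0; congr (_ ++ _); rewrite map_rev.
Qed.

Lemma nth_kron u v n i j : size v = n -> (j < n)%N ->
  (kron u v)`_(i * n + j) = u`_i * v`_j.
Proof.
move=> <- hj; elim: u i => [|x u IH] i; first by rewrite /= !nth_nil mul0r.
rewrite kron_cons nth_cat size_map; case: i => [|i].
  by rewrite mul0n add0n hj (nth_map 0).
by rewrite mulSn -addnA ltnNge leq_addr /= addKn IH.
Qed.

Lemma Poly_kron u v : Poly (kron u v) = (Poly u \Po 'X^(size v)) * Poly v.
Proof.
elim: u => [|x u IH]; first by rewrite /= comp_poly0 mul0r.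
rewrite kron_cons Poly_cat size_map IH Poly_scale Poly_cons.
by rewrite comp_polyD comp_polyC comp_polyM comp_polyX; ring.
Qed.

Lemma all_kron_real u v :
  all [in Creal] u -> all [in Creal] v -> all [in Creal] (kron u v).
Proof.
elim: u => [|x u IH] //= /andP [xR uR] vR; rewrite all_cat IH // andbT all_map.
by apply/allP => y yv /=; rewrite rpredM // (allP vR).
Qed.

Definition acorr (u : seq algC) : {poly algC} := Poly u * Poly (rev u).

Lemma acorr_kron_pair (c d s t : seq algC) : size c = size d -> size s = size t ->
  acorr (seqsub (kron c s) (kron (rev d) t))
  + acorr [seq p.1 + p.2 | p <- zip (kron d s) (kron (rev c) t)]
  = ((acorr c + acorr d) \Po 'X^(size s)) * (acorr s + acorr t).
Proof.
move=> scd sst.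
have sz1 : size (kron c s) = size (kron (rev d) t) by rewrite !size_kron size_rev scd sst.
have sz2 : size (kron d s) = size (kron (rev c) t) by rewrite !size_kron size_rev scd sst.
have szr1 : size (kron (rev c) (rev s)) = size (kron d (rev t)).
  by rewrite !size_kron !size_rev scd sst.
have szr2 : size (kron (rev d) (rev s)) = size (kron c (rev t)).
  by rewrite !size_kron !size_rev scd sst.
rewrite /acorr /seqsub !rev_zip_map // !rev_kron !revK -/(seqsub _ _) -/(seqsub _ _).
rewrite !Poly_seqsub // !Poly_zip_add // !Poly_kron !size_rev -sst.
by rewrite comp_polyD !comp_polyM; ring.
Qed.

Lemma acorr_half_sum_diff (a b : seq algC) : size a = size b ->
  acorr [seq (p.1 + p.2) / 2 | p <- zip a b] + acorr [seq (p.2 - p.1) / 2 | p <- zip a b]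
  = 2^-1%:P * (acorr a + acorr b).
Proof.
move=> sab; have sab_rev : size (rev a) = size (rev b) by rewrite !size_rev.
rewrite /acorr !rev_zip_map // !Poly_half_sum // !Poly_half_diff //.
have half : (2^-1 * 2^-1 * 2 : algC) = 2^-1 by field.
by rewrite -[in RHS]half !polyCM polyC_natr; ring.
Qed.

(* The Golay property in polynomial form: for real [a], the coefficients of [acorr a] are the
   aperiodic autocorrelations of [a], the one at shift 0 sitting at degree [N - 1]. *)
Definition real_gcp (N : nat) (A : spair) : Prop :=
  [/\ size A.1 = N, size A.2 = N, all [in Creal] A.1, all [in Creal] A.2 &
      'X * (acorr A.1 + acorr A.2) = (2 * N%:R)%:P * 'X^N].

Lemma real_gcp_turyn n M A B : real_gcp n A -> real_gcp M B -> real_gcp (n * M) (turyn A B).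
Proof.
case: A => a b; case: B => c d [/= sa sb aR bR gcpA] [/= sc sd cR dR gcpB].
have sab : size a = size b by rewrite sa sb.
have halfR x y : x \in Creal -> y \in Creal -> (x + y) / 2 \in Creal.
  by move=> xR yR; rewrite rpredM ?rpredD ?rpredV ?rpred_nat.
set s := [seq (p.1 + p.2) / 2 | p <- zip a b].
set t := [seq (p.2 - p.1) / 2 | p <- zip a b].
have ss : size s = n by rewrite size_zip_map.
have st : size t = n by rewrite size_zip_map.
have sR : all [in Creal] s by apply: all_zip_map.
have tR : all [in Creal] t.
  by apply: all_zip_map => // x y xR yR; rewrite halfR ?rpredN.
have sz1 : size (kron c s) = size (kron (rev d) t) by rewrite !size_kron size_rev sc sd ss st.
have sz2 : size (kron d s) = size (kron (rev c) t) by rewrite !size_kron size_rev sc sd ss st.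
split=> /=.
- by rewrite /seqsub size_zip_map // size_kron sc ss mulnC.
- by rewrite size_zip_map // size_kron sd ss mulnC.
- apply: all_zip_map => [x y xR yR||]; first by rewrite rpredB.
    exact: all_kron_real.
  by apply: all_kron_real; rewrite ?all_rev.
- apply: all_zip_map => [x y xR yR||]; first by rewrite rpredD.
    exact: all_kron_real.
  by apply: all_kron_real; rewrite ?all_rev.
apply: (@mulfI _ 'X^n); first by rewrite expf_neq0 // polyX_eq0.
rewrite acorr_kron_pair ?size_rev ?sc ?sd ?ss ?st //.
have -> : acorr s + acorr t = 2^-1%:P * (acorr a + acorr b) by exact: acorr_half_sum_diff.
have gcpB_n := congr1 (fun p => p \Po 'X^n) gcpB.
rewrite /= !comp_polyM comp_polyX comp_polyC comp_Xn_poly in gcpB_n.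
transitivity ((('X^n * ((acorr c + acorr d) \Po 'X^n))
               * ('X * (acorr a + acorr b))) * 2^-1%:P); first by ring.
rewrite gcpB_n gcpA -exprM mulnC.
have two : (2 * M%:R * (2 * n%:R) * 2^-1 : algC) = 2 * (M * n)%:R.
  by rewrite natrM; field.
by rewrite -two !polyCM; ring.
Qed.

Lemma nth_turyn n M (a b c d : seq algC) i r :
  size a = n -> size b = n -> size c = M -> size d = M -> (i < M)%N -> (r < n)%N ->
  let C := turyn (a, b) (c, d) in
  C.1`_(i * n + r) = c`_i * ((a`_r + b`_r) / 2) - d`_(M - i.+1) * ((b`_r - a`_r) / 2)
  /\ C.2`_(i * n + r) = d`_i * ((a`_r + b`_r) / 2) + c`_(M - i.+1) * ((b`_r - a`_r) / 2).
Proof.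
move=> sa sb sc sd iM rn /=.
have sab : size a = size b by rewrite sa sb.
set s := [seq (p.1 + p.2) / 2 | p <- zip a b].
set t := [seq (p.2 - p.1) / 2 | p <- zip a b].
have ss : size s = n by rewrite size_zip_map.
have st : size t = n by rewrite size_zip_map.
have sz1 : size (kron c s) = size (kron (rev d) t) by rewrite !size_kron size_rev sc sd ss st.
have sz2 : size (kron d s) = size (kron (rev c) t) by rewrite !size_kron size_rev sc sd ss st.
have ir : (i * n + r < size (kron c s))%N by rewrite size_kron ss sc; nia.
rewrite /seqsub !nth_zip_map //=; last by rewrite size_kron sd -sc -size_kron.
rewrite !(nth_kron _ _ ss) // !(nth_kron _ _ st) // !nth_rev ?sc ?sd //.
by rewrite !(nth_zip_map _ sab) ?sa.
Qed.

Definition agree_ends (p : nat) (A : spair) : Prop :=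
  (forall j, (j < p)%N -> A.1`_j = A.2`_j) /\
  (forall j, (j < p)%N -> A.1`_(size A.1 - j.+1) = - A.2`_(size A.1 - j.+1)).

Lemma agree_ends_turyn n M p (a b c d : seq algC) :
  size a = n -> size b = n -> size c = M -> size d = M -> (p <= M)%N ->
  agree_ends p (c, d) -> agree_ends (n * p) (turyn (a, b) (c, d)).
Proof.
move=> sa sb sc sd pM [/= front]; rewrite sc => back.
have ends i r : (i < p)%N -> (r < n)%N ->
    let C := turyn (a, b) (c, d) in
    C.1`_(i * n + r) = C.2`_(i * n + r) /\
    C.1`_(M * n - (i * n + r).+1) = - C.2`_(M * n - (i * n + r).+1).
  move=> ip rn /=; have iM : (i < M)%N by apply: leq_trans pM.
  have iM' : (M - i.+1 < M)%N by lia.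
  have rn' : (n - r.+1 < n)%N by lia.
  have -> : (M * n - (i * n + r).+1 = (M - i.+1) * n + (n - r.+1))%N by nia.
  have [-> ->] := nth_turyn sa sb sc sd iM rn.
  have [-> ->] := nth_turyn sa sb sc sd iM' rn'.
  have -> : (M - (M - i.+1).+1 = i)%N by lia.
  by rewrite front // back //; split; ring.
have sC : size (turyn (a, b) (c, d)).1 = (M * n)%N.
  by rewrite /= /seqsub size_zip_map ?size_kron ?size_zip_map ?size_rev ?sa ?sb ?sc ?sd.
rewrite /agree_ends sC; split=> j jp.
all: have n0 : (0 < n)%N by nia.
all: have [] := ends (j %/ n)%N (j %% n)%N; rewrite -?divn_eq ?ltn_pmod //.
all: by rewrite ltn_divLR // mulnC.
Qed.

Lemma Poly_pm s : Poly (pm s) = foldr (fun z p => z%:~R + 'X * p) 0 s.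
Proof.
elim: s => [|z s IH] //=; rewrite cons_poly_def IH.
by rewrite (rmorph_int polyC) addrC mulrC.
Qed.

Lemma rev_pm s : rev (pm s) = pm (rev s).
Proof. by rewrite /pm map_rev. Qed.

Lemma golay_K10 : 'X * (acorr K10.1 + acorr K10.2) = (2 * 10%:R)%:P * 'X^10.
Proof.
by rewrite /acorr /K10 !rev_pm !Poly_pm /= -natrM polyC_natr; ring.
Qed.

Lemma golay_K26 : 'X * (acorr K26.1 + acorr K26.2) = (2 * 26%:R)%:P * 'X^26.
Proof.
by rewrite /acorr /K26 !rev_pm !Poly_pm /= -natrM polyC_natr; ring.
Qed.

Lemma real_pm s : all [in Creal] (pm s).
Proof. by rewrite all_map; apply/allP => z _ /=; rewrite rpred_int. Qed.

Definition gcp_ends (N p : nat) (A : spair) : Prop :=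
  [/\ real_gcp N A, agree_ends p A & (p < N)%N].

Lemma gcp_ends_K10 : gcp_ends 10 4 K10.
Proof.
split=> //; first by split; rewrite ?real_pm ?golay_K10.
by split=> j jp; do 4? [case: j jp => [|j] jp]; rewrite /= ?rmorphN ?opprK.
Qed.

Lemma gcp_ends_K26 : gcp_ends 26 12 K26.
Proof.
split=> //; first by split; rewrite ?real_pm ?golay_K26.
by split=> j jp; do 12? [case: j jp => [|j] jp]; rewrite /= ?rmorphN ?opprK.
Qed.

Lemma gcp_ends_turyn n M p A B : (0 < n)%N ->
  real_gcp n A -> gcp_ends M p B -> gcp_ends (n * M) (n * p) (turyn A B).
Proof.
case: A => a b; case: B => c d n0 gcpA [gcpB ends pM].
have [/= sa sb _ _ _] := gcpA; have [/= sc sd _ _ _] := gcpB.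
split; first exact: real_gcp_turyn gcpA gcpB.
  exact: agree_ends_turyn sa sb sc sd (ltnW pM) ends.
by rewrite ltn_pmul2l.
Qed.

Lemma gcp_ends_iter K n p k :
  gcp_ends n p K -> gcp_ends (n ^ k.+1) (n ^ k * p) (iter k (turyn K) K).
Proof.
move=> gK; have [gcpK _ pn] := gK; elim: k => [|k IH]; first by rewrite expn1 mul1n.
rewrite iterS expnS [in X in gcp_ends _ X]expnS -mulnA.
by apply: gcp_ends_turyn; first exact: leq_ltn_trans pn.
Qed.

Lemma turyn_chain_cons init c s :
  turyn_chain init (c :: s) = turyn_chain (turyn (if c then K10 else K26) init) s.
Proof. by []. Qed.

Lemma gcp_ends_chain s init N p : gcp_ends N p init ->
  gcp_ends (10 ^ count id s * 26 ^ (size s - count id s) * N)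
           (10 ^ count id s * 26 ^ (size s - count id s) * p) (turyn_chain init s).
Proof.
elim: s init N p => [|c s IH] init N p ginit; first by rewrite /= !mul1n.
have [[g10 _ _] [g26 _ _]] := (gcp_ends_K10, gcp_ends_K26).
rewrite turyn_chain_cons (_ : size (c :: s) = (size s).+1) //; case: c.
- have := IH _ _ _ (gcp_ends_turyn (n := 10) isT g10 ginit).
  rewrite (_ : count id (true :: s) = (count id s).+1) // subSS expnS.
  by rewrite !mulnA [(10 ^ _ * 26 ^ _ * 10)%N]mulnC !mulnA.
- have := IH _ _ _ (gcp_ends_turyn (n := 26) isT g26 ginit).
  rewrite (_ : count id (false :: s) = count id s) // subSn ?count_size // expnS.
  by rewrite !mulnA [(10 ^ _ * 26 ^ _ * 26)%N]mulnC [(10 ^ _ * 26)%N]mulnC !mulnA.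
Qed.

Definition corr_poly (g h : seq algC) : {poly algC} := Poly g * Poly (map Num.conj (rev h)).

Lemma rho_Posz (g h : seq algC) t : size g = size h -> (t < size g)%N ->
  rho g h (Posz t) = (corr_poly g h)`_(size g - t.+1).
Proof.
move=> sgh tg; rewrite /rho coefM (_ : (size g - t.+1).+1 = size g - t)%N; last by lia.
apply: eq_bigr => [[j /= jt]] _; rewrite !coef_Poly (nth_map 0) ?size_rev -?sgh; last by lia.
by rewrite nth_rev -?sgh; [congr (_ * (nth _ _ _)^*); lia | lia].
Qed.

Lemma rho_Negz (g h : seq algC) n : size g = size h ->
  rho g h (Negz n) = (rho h g (Posz n.+1))^*.
Proof.
move=> sgh; rewrite /rho /= rmorph_sum sgh; apply: eq_bigr => j _.
by rewrite rmorphM mulrC; congr (_ * _); exact/esym/conjCK.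
Qed.

Lemma CZCP_corr_poly n Z (g h : seq algC) : (Z < n)%N -> size g = n -> size h = n ->
  (forall t, ((1 <= t <= Z) || (n - Z <= t <= n - 1))%N ->
     (corr_poly g g + corr_poly h h)`_(n - t.+1) = 0) ->
  (forall t, (n - Z <= t <= n - 1)%N -> (corr_poly g h + corr_poly h g)`_(n - t.+1) = 0) ->
  CZCP n Z g h.
Proof.
move=> Zn sg sh auto cross.
have auto_pos t : ((1 <= t <= Z) || (n - Z <= t <= n - 1))%N ->
    rho g g (Posz t) + rho h h (Posz t) = 0.
  by move=> tZ; rewrite !rho_Posz ?sg ?sh -?coefD ?auto //; lia.
have cross_pos t : (n - Z <= t <= n - 1)%N -> rho g h (Posz t) + rho h g (Posz t) = 0.
  by move=> tZ; rewrite !rho_Posz ?sg ?sh -?coefD ?cross //; lia.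
split=> // -[t|t] tZ; rewrite ?auto_pos ?cross_pos //.
  by rewrite !rho_Negz ?sg ?sh // -rmorphD auto_pos ?rmorph0.
by rewrite !rho_Negz ?sg ?sh // -rmorphD addrC cross_pos ?rmorph0.
Qed.

Lemma coefM_low (R : nzRingType) (P Q : {poly R}) p k :
  (forall j, (j < p)%N -> P`_j = 0) -> (k < p)%N -> (P * Q)`_k = 0.
Proof.
move=> P0 kp; rewrite coefM big1 // => -[j /= jk] _.
by rewrite P0 ?mul0r //; lia.
Qed.

Lemma map_conj_real (C : numClosedFieldType) (s : seq C) :
  all [in Num.real] s -> map Num.conj s = s.
Proof. by elim: s => [|x s IH] //= /andP [/conj_Creal -> /IH ->]. Qed.

Section Extension.

Variables (N p : nat) (a b : seq algC) (x : algC).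
Hypothesis gcp : gcp_ends N p (a, b).

(* The paper's g and h, once its four conditions on the corner entries are solved:
   x1 = x0 = x, y0 = - x^*, y1 = x^*. *)
Let g := x :: rcons (a ++ rev b) (- x^*).
Let h := x :: rcons (b ++ [seq - y | y <- rev a]) x^*.

Let A := Poly a.
Let B := Poly b.
Let Ar := Poly (rev a).
Let Br := Poly (rev b).
Let XN : {poly algC} := 'X^N.

Lemma Poly_ext_g : Poly g = x%:P + 'X * (A + XN * Br - XN * XN * (x^*)%:P).
Proof.
have [[/= sa sb _ _ _] _ _] := gcp.
rewrite /g cons_poly_def Poly_rcons Poly_cat size_cat size_rev sa sb exprD polyCN.
by rewrite /A /Br /XN; ring.
Qed.

Lemma Poly_conj_rev_ext_g :
  Poly (map Num.conj (rev g)) = - x%:P + 'X * (B + XN * Ar + XN * XN * (x^*)%:P).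
Proof.
have [[/= sa sb aR bR _] _ _] := gcp.
rewrite /g rev_cons rev_rcons map_rcons map_cons rev_cat revK map_conj_real; last first.
  by rewrite all_cat bR all_rev.
rewrite Poly_rcons Poly_cons Poly_cat /= size_cat size_rev sa sb rmorphN /= conjCK polyCN.
by rewrite /B /Ar /XN !exprS exprD; ring.
Qed.

Lemma Poly_ext_h : Poly h = x%:P + 'X * (B - XN * Ar + XN * XN * (x^*)%:P).
Proof.
have [[/= sa sb _ _ _] _ _] := gcp.
rewrite /h cons_poly_def Poly_rcons Poly_cat size_cat size_map size_rev sa sb exprD Poly_opp.
by rewrite /B /Ar /XN; ring.
Qed.

Lemma Poly_conj_rev_ext_h :
  Poly (map Num.conj (rev h)) = x%:P + 'X * (- A + XN * Br + XN * XN * (x^*)%:P).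
Proof.
have [[/= sa sb aR bR _] _ _] := gcp.
rewrite /h rev_cons rev_rcons map_rcons map_cons rev_cat -map_rev revK map_conj_real; last first.
  by rewrite all_cat all_map all_rev bR andbT; apply/allP => y /(allP aR) /= yR; rewrite rpredN.
rewrite Poly_rcons Poly_cons Poly_cat /= size_cat size_map size_rev sa sb Poly_opp /= conjCK.
by rewrite /A /Br /XN !exprS exprD; ring.
Qed.

Lemma ext_autocorr_poly :
  corr_poly g g + corr_poly h h =
  'X^((2 * N).+1) * (4 * (N%:R + x * x^*))%:P + 'X * ((2 * x)%:P * (B - A))
  + 'X^((3 * N).+2) * ((2 * x^*)%:P * (Br - Ar)).
Proof.
have [[_ _ _ _ /= gcpX] _ _] := gcp.
rewrite /corr_poly Poly_ext_g Poly_conj_rev_ext_g Poly_ext_h Poly_conj_rev_ext_h.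
transitivity ('X * XN * ('X * (acorr a + acorr b)) * 2 + 'X * ((2 * x)%:P * (B - A))
   + 'X * XN * XN * (4 * x * x^*)%:P + 'X * 'X * XN * XN * XN * ((2 * x^*)%:P * (Br - Ar))).
  by rewrite /acorr !polyCM -/A -/B -/Ar -/Br polyC_natr; ring.
have -> : (4 * (N%:R + x * x^*))%:P = (2 * N%:R)%:P * 2 + (4 * x * x^*)%:P :> {poly algC}.
  by rewrite -polyC_natr -polyCM -polyCD; congr _%:P; ring.
by rewrite gcpX /XN !exprS !mulSn mul0n addn0 !exprD; ring.
Qed.

Lemma ext_crosscorr_poly :
  corr_poly g h + corr_poly h g =
  'X^2 * ((B - A) * (B + A)) + 'X^(N.+1) * ((2 * x)%:P * (Ar + Br))
  + 'X^((2 * N).+2) * (Br * Br - Ar * Ar + (2 * x^*)%:P * (A + B)).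
Proof.
rewrite /corr_poly Poly_ext_g Poly_conj_rev_ext_g Poly_ext_h Poly_conj_rev_ext_h.
by rewrite /XN !exprS !mulSn mul0n addn0 exprD expr0 polyCM; ring.
Qed.

Lemma ext_diff_coef j : ((j < p) || (N <= j))%N -> (B - A)`_j = 0.
Proof.
have [[/= sa sb _ _ _] [/= front _] _] := gcp.
rewrite coefB !coef_Poly => /orP [jp | Nj]; first by rewrite front ?subrr.
by rewrite !nth_default ?sa ?sb ?subrr.
Qed.

Lemma ext_autocorr_coef k : ((k <= p) || (2 * N - p <= k <= 2 * N))%N ->
  (corr_poly g g + corr_poly h h)`_k = 0.
Proof.
have [_ _ pN] := gcp; move=> hk.
have [k1 k2] : (k < (2 * N).+1)%N /\ (k < (3 * N).+2)%N by lia.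
rewrite ext_autocorr_poly !coefD !coefXnM k1 k2.
rewrite add0r addr0 coefXM; case: eqP => // k0.
by rewrite coefCM ext_diff_coef ?mulr0 //; apply/orP; lia.
Qed.

Lemma ext_crosscorr_coef k : (k <= p)%N -> (corr_poly g h + corr_poly h g)`_k = 0.
Proof.
have [_ _ pN] := gcp; move=> kp.
have [k1 k2] : (k < N.+1)%N /\ (k < (2 * N).+2)%N by lia.
rewrite ext_crosscorr_poly !coefD !coefXnM k1 k2.
rewrite !addr0; case: ifP => // k_ge2.
by apply: (@coefM_low _ _ _ p) => [j jp|]; [rewrite ext_diff_coef ?jp | lia].
Qed.

Lemma czcp_extension : CZCP (2 * N + 2) (p + 1) g h.
Proof.
have [[/= sa sb _ _ _] _ pN] := gcp.
apply: CZCP_corr_poly => [||| t tZ | t tZ].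
- by lia.
- by rewrite /g /= size_rcons size_cat size_rev sa sb; lia.
- by rewrite /h /= size_rcons size_cat size_map size_rev sa sb; lia.
- by apply: ext_autocorr_coef; apply/orP; lia.
- by apply: ext_crosscorr_coef; lia.
Qed.

End Extension.

Theorem theorem3 (q : nat) (a b : seq algC) (N Z : nat) (x0 y0 x1 y1 : algC) :
  (2 <= q)%N ->
  [\/ (exists beta : nat, [/\ (1 <= beta)%N, N = (10 ^ beta)%N,
          (a, b) = iter beta.-1 (turyn K10) K10 & Z = (4 * N %/ 10 + 1)%N]),
      (exists gamma : nat, [/\ (1 <= gamma)%N, N = (26 ^ gamma)%N,
          (a, b) = iter gamma.-1 (turyn K26) K26 & Z = (12 * N %/ 26 + 1)%N]) |
      (exists (beta gamma : nat) (s : seq bool),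
          [/\ (1 <= gamma)%N, N = (10 ^ beta * 26 ^ gamma)%N,
              size s = (beta + gamma).-1 /\ count id s = beta,
              (a, b) = turyn_chain K26 s & Z = (12 * N %/ 26 + 1)%N])] ->
  x0 \in Uq q -> y0 \in Uq q -> x1 \in Uq q -> y1 \in Uq q ->
  x0 - y1^* = 0 -> x1 + y0^* = 0 -> x0 = x1 -> y0^* = - y1^* ->
  let c := rev b in
  let d := [seq - x | x <- rev a] in
  let e := a ++ c in
  let f := b ++ d in
  let g := x0 :: rcons e y0 in
  let h := x1 :: rcons f y1 in
  CZCP (2 * N + 2) Z g h.
Proof.
(* The corner entries need not be roots of unity. *)
move=> _ kind _ _ _ _ /eqP; rewrite subr_eq0 => /eqP cy1 _ <- cy0.
have -> : y1 = x0^* by rewrite cy1 conjCK.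
have -> : y0 = - x0^* by rewrite -[y0]conjCK cy0 cy1 rmorphN /= conjCK.
have [p [gcp ->]] : exists p, gcp_ends N p (a, b) /\ Z = (p + 1)%N.
  case: kind => [[k [k1 -> ab ->]] | [k [k1 -> ab ->]] | [beta [k [s [k1 -> [ss cs] ab ->]]]]].
  - case: k k1 ab => // k _ ab; exists (10 ^ k * 4)%N; rewrite ab.
    by split; [exact: gcp_ends_iter gcp_ends_K10 | rewrite expnS mulnCA mulKn // mulnC].
  - case: k k1 ab => // k _ ab; exists (26 ^ k * 12)%N; rewrite ab.
    by split; [exact: gcp_ends_iter gcp_ends_K26 | rewrite expnS mulnCA mulKn // mulnC].
  - case: k k1 ss => // k _ ss; exists (10 ^ beta * 26 ^ k * 12)%N; rewrite ab.
    have := gcp_ends_chain s gcp_ends_K26; rewrite cs (_ : size s - beta = k)%N; last by lia.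
    rewrite expnSr -!mulnA => chain; split=> //.
    by rewrite !mulnA mulnK //; nia.
exact: czcp_extension.
Qed.
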